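(* Let $k>2$ be even, let $\pi=(1\,2\,\cdots\,k)\in\mathbb{S}_k$, $\mathcal{O}_\pi$ its conjugacy class (the $k$-cycles), so that $\mathbb{S}_k^\pi=\langle\pi\rangle\cong\mathbb{Z}_k$. For a $k$-th root of unity $\omega$ let $\chi_\omega$ be the character of $\langle\pi\rangle$ with $\chi_\omega(\pi)=\omega$. Then $\dim\mathfrak{B}(\mathcal{O}_\pi,\chi_\omega)=\infty$ if $\omega\ne-1$, and the braiding of $M(\mathcal{O}_\pi,\chi_\omega)$ is negative if $\omega=-1$.
   Context: Permutations are composed right to left. For a finite group $G$, a conjugacy class $\mathcal{C}$ of $G$, a fixed $s\in\mathcal{C}$ with centralizer $G^s$ and an irreducible representation $(\rho,V)$ of $G^s$, $M(\mathcal{C},\rho)$ is the irreducible Yetter–Drinfeld module over $\mathbb{C}G$: enumerate $\mathcal{C}=\{t_1=s,\dots,t_M\}$, choose $g_i\in G$ with $g_isg_i^{-1}=t_i$; then $M(\mathcal{C},\rho)=\bigoplus_i g_i\otimes V$ with grading $\deg(g_i\otimes v)=t_i$, action $g\cdot(g_i\otimes v)=g_j\otimes\rho(\gamma)v$ where $gg_i=g_j\gamma$, $\gamma\in G^s$, and braiding $c((g_i\otimes v)\otimes(g_j\otimes w))=(g_h\otimes\rho(\gamma)w)\otimes(g_i\otimes v)$ where $t_ig_j=g_h\gamma$, $\gamma\in G^s$. $\mathfrak{B}(\mathcal{C},\rho)$ is the Nichols algebra of this braided vector space. When $\rho$ is one-dimensional, the braiding is called negative if for all $i,j$ with $t_it_j=t_jt_i$,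 setting $q_{ij}:=\rho(g_j^{-1}t_ig_j)$, one has $q_{ii}=-1$ and $q_{ij}q_{ji}=1$. *)

From HB Require Import structures.
From mathcomp Require Import all_boot all_order all_algebra all_fingroup all_field.
Unset Printing Implicit Defensive.
Import GRing.Theory Num.Theory.
Local Open Scope ring_scope.

(* A linear map on V^{(x)n} is encoded by its coefficient function        *)
(* A w' w = coefficient of the basis word x_{w'} in A(x_w).               *)
(* The braiding is given by cc h t' t u = coefficient of x_h (x) x_t' in  *)
(* c(x_t (x) x_u).                                                        *)

Section Nichols.
Variable X : finType.
Variable cc : X -> X -> X -> X -> algC.

Definition op (n : nat) := n.-tuple X -> n.-tuple X -> algC.

Definition id_op n : op n := fun w' w => (w' == w)%:R.

Definition comp_op n (A B : op n) : op n :=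
  fun w' w => \sum_(v : n.-tuple X) A w' v * B v w.

(* c_i : the braiding acting on tensor positions i, i+1 (0-indexed) of V^{(x)n} *)
Definition cop n (i : nat) : op n := fun w' w =>
  match @insub nat (fun j => j < n)%N _ i, @insub nat (fun j => j < n)%N _ i.+1 with
  | Some a, Some b =>
      [forall j : 'I_n, (j != a) && (j != b) ==> (tnth w' j == tnth w j)]%:R
      * cc (tnth w' a) (tnth w' b) (tnth w a) (tnth w b)
  | _, _ => 0
  end.

(* product c_{i_1} c_{i_2} ... c_{i_r} (c_{i_r} applied first) *)
Definition prodc n (s : seq nat) : op n := foldr (fun i A => comp_op n (cop n i) A) (id_op n) s.

Definition init_tuple n (w : n.+1.-tuple X) : n.-tuple X :=
  [tuple tnth w (widen_ord (leqnSn n) i) | i < n].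

Definition ext_op n (A : op n) : op n.+1 := fun w' w =>
  A (init_tuple n w') (init_tuple n w) * (tnth w' ord_max == tnth w ord_max)%:R.

(* Quantum symmetrizer Omega_n = sum_{sigma in S_n} M(sigma) (Matsumoto lift),
   computed through the coset decomposition of S_{n+1} by S_n:
   Omega_{n+1} = (Omega_n (x) id) (1 + c_n + c_n c_{n-1} + ... + c_n ... c_1)
   (1-indexed generators; here 0-indexed: c_{n-1}, ..., c_0). *)
Fixpoint Omega (n : nat) : op n :=
  match n return op n with
  | 0 => id_op 0
  | m.+1 => comp_op m.+1 (ext_op m (Omega m))
              (fun w' w => \sum_(j < m.+1) prodc m.+1 [seq (m.-1 - l)%N | l <- iota 0 j] w' w)
  end.

Definition Omega_mx n : 'M[algC]_#|{: n.-tuple X}| :=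
  \matrix_(a, b) Omega n (enum_val a) (enum_val b).

(* B^n(V) = T^n(V) / ker Omega_n, so dim B^n(V) = rank Omega_n and
   dim B(V) = sum_n rank Omega_n;  dim B(V) = infinity : *)
Definition nichols_dim_infinite : Prop :=
  forall N : nat, exists m : nat, (N <= \sum_(n < m) \rank (Omega_mx n))%N.

End Nichols.

(* Part 2. Symmetric group S_k, permutations composed RIGHT TO LEFT.      *)
(* MathComp's product on {perm _} is left-to-right ((s*t) x = t (s x)),   *)
(* so the paper's product a b is  rcomp a b := b * a  ( (a b) x = a (b x) ). *)

Definition rcomp k (a b : {perm 'I_k}) : {perm 'I_k} := (b * a)%g.

(* pi = (1 2 ... k), with the points 1..k labelled 0..k-1 *)
Definition pik k : {perm 'I_k} := perm (@ordS_inj k).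

Definition Opi k : {set {perm 'I_k}} :=
  [set rcomp k (rcomp k g (pik k)) g^-1 | g : {perm 'I_k}].

Definition Xk k := {t : {perm 'I_k} | t \in Opi k}.

(* chi_omega on <pi> : pi^m |-> omega^m (and 0 off <pi>, never used) *)
Definition chi k (omega : algC) (gam : {perm 'I_k}) : algC :=
  if [pick m : 'I_k | gam == (pik k ^+ m)%g] is Some m then omega ^+ m else 0.

(* Braiding of M(O_pi, rho) for one-dimensional rho, with chosen g_t
   (g_t pi g_t^{-1} = t): c(x_t (x) x_u) = rho(gamma) x_h (x) x_t where
   t g_u = g_h gamma, gamma in the centralizer S_k^pi. *)
Definition yd_coef k (rho : {perm 'I_k} -> algC) (g : Xk k -> {perm 'I_k})
  (h t' t u : Xk k) : algC :=
  let gam := rcomp k (rcomp k (g h)^-1 (val t)) (g u) in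
  ((t' == t) && (gam \in 'C[pik k]%g))%:R * rho gam.

Definition negative_braiding k (rho : {perm 'I_k} -> algC) (g : Xk k -> {perm 'I_k}) : Prop :=
  forall t u : Xk k, rcomp k (val t) (val u) = rcomp k (val u) (val t) ->
    let q (a b : Xk k) := rho (rcomp k (rcomp k (g b)^-1 (val a)) (g b)) in
    q t t = -1 /\ q t u * q u t = 1.

(* A function [F : seq X -> algC] is read as the tensor with coefficient [F w] on
   the word [w].  When the braiding is diagonal on the letters occurring in [F], the
   recursion Omega_(n+1) = (Omega_n (x) id) (1 + c_n + c_n c_(n-1) + ...) turns the
   quantum symmetrizer evaluated at a word [y] into the iterated skew derivation
   d_(y_1) ... d_(y_n) F; so Omega_n has nonzero rank as soon as some tensor of
   degree n survives n skew derivations.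

   The k-cycles pi and pi^-1 commute, and x_pi, x_(pi^-1) span a braided subspace of
   diagonal type with q_11 = q_22 = omega and q_12 = q_21 = omega^-1.  For omega = 1
   the powers of x_pi survive, as d^n x_pi^n = n!; for omega <> 1, -1 the powers of
   z = x_pi x_(pi^-1) - omega^-1 x_(pi^-1) x_pi survive, as d_1 d_2 z^n is
   (1 - omega^-2) n z^(n-1).  Hence the Nichols algebra is nonzero in every even degree.

   For omega = -1: if t and u commute, then g_u^-1 t g_u centralises pi, so it is a
   power pi^m, and it is conjugate to pi.  As k is even, m is odd (otherwise its
   k/2-th power would be trivial), so q_tu = (-1)^m = -1. *)

From mathcomp Require Import all_boot all_order all_algebra all_fingroup all_field.
From mathcomp Require Import ring zify.
Local Open Scope ring_scope.
Import GRing.Theory Num.Theory.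
Set Implicit Arguments. Unset Strict Implicit.

Section SkewDerivations.
Variables (X : eqType) (q : X -> X -> algC).
Implicit Types (a b : X) (v w : seq X) (F G H : seq X -> algC).

Definition qprod a w : algC := \prod_(y <- w) q a y.

Definition skew_der a F v : algC :=
  \sum_(p < (size v).+1) qprod a (drop p v) * F (take p v ++ a :: drop p v).

Definition lmul b H w : algC := if w is x :: w' then (x == b)%:R * H w' else 0.

Definition twist a H w : algC := qprod a w * H w.

Definition fone w : algC := (w == [::])%:R.

Fixpoint iter_der (r : seq X) F : algC :=
  if r is a :: r' then iter_der r' (skew_der a F) else F [::].

Lemma eq_skew_der a F G : F =1 G -> skew_der a F =1 skew_der a G.
Proof. by move=> eqFG v; apply: eq_bigr => p _; rewrite eqFG. Qed.

Lemma skew_derZ a c F v : skew_der a (fun w => c * F w) v = c * skew_der a F v.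
Proof. by rewrite /skew_der big_distrr; apply: eq_bigr => p _; rewrite mulrCA. Qed.

Lemma skew_derD a F G v :
  skew_der a (fun w => F w + G w) v = skew_der a F v + skew_der a G v.
Proof. by rewrite /skew_der -big_split; apply: eq_bigr => p _; rewrite mulrDr. Qed.

Lemma skew_derB a F G v :
  skew_der a (fun w => F w - G w) v = skew_der a F v - skew_der a G v.
Proof.
by rewrite /skew_der -sumrB; apply: eq_bigr => p _; rewrite mulrBr.
Qed.

Lemma skew_der_fone a v : skew_der a fone v = 0.
Proof.
by rewrite /skew_der big1 // => p _; rewrite /fone; case: (take p v) => [|? ?]; rewrite mulr0.
Qed.

Lemma skew_der0 a v : skew_der a (fun=> 0) v = 0.
Proof. by rewrite /skew_der big1 // => p _; rewrite mulr0. Qed.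

Lemma skew_der_nil a F : skew_der a F [::] = F [:: a].
Proof. by rewrite /skew_der big_ord1 /qprod big_nil mul1r. Qed.

Lemma skew_der_cons a F x v : skew_der a F (x :: v) =
  qprod a (x :: v) * F (a :: x :: v) + skew_der a (fun w => F (x :: w)) v.
Proof. by rewrite /skew_der big_ord_recl. Qed.

Lemma skew_der_lmul a b H v :
  skew_der a (lmul b H) v = (a == b)%:R * twist a H v + lmul b (skew_der a H) v.
Proof.
case: v => [|x v]; first by rewrite skew_der_nil /twist /qprod big_nil mul1r addr0.
by rewrite skew_der_cons skew_derZ /twist mulrCA.
Qed.

Lemma skew_der_lmul_eq a H v :
  skew_der a (lmul a H) v = twist a H v + lmul a (skew_der a H) v.
Proof. by rewrite skew_der_lmul eqxx mul1r. Qed.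

Lemma skew_der_lmul_neq a b H :
  a != b -> skew_der a (lmul b H) =1 lmul b (skew_der a H).
Proof. by move=> /negbTE ab v; rewrite skew_der_lmul ab mul0r add0r. Qed.

Lemma twist_lmul a b H v : twist a (lmul b H) v = q a b * lmul b (twist a H) v.
Proof.
case: v => [|x v]; first by rewrite /twist !mulr0.
rewrite /twist /qprod /= big_cons.
by case: eqP => [->|_]; rewrite ?mul1r ?mulrA // !(mul0r, mulr0).
Qed.

Lemma twist_fone a v : twist a fone v = fone v.
Proof. by case: v => [|x v]; rewrite /twist /fone /qprod ?big_nil ?mul1r ?mulr0. Qed.

Lemma eq_lmul b F G : F =1 G -> lmul b F =1 lmul b G.
Proof. by move=> eqFG [|x w] //=; rewrite eqFG. Qed.

Lemma lmul0 b v : lmul b (fun=> 0) v = 0.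
Proof. by case: v => [|x v] /=; rewrite ?mulr0. Qed.

Lemma lmulZ b c F v : lmul b (fun w => c * F w) v = c * lmul b F v.
Proof. by case: v => [|x v] /=; rewrite ?mulr0 // mulrCA. Qed.

Lemma lmulD b F G v : lmul b (fun w => F w + G w) v = lmul b F v + lmul b G v.
Proof. by case: v => [|x v] /=; rewrite ?addr0 ?mulrDr. Qed.

Lemma twist_lmul2 a b c H v :
  twist a (lmul b (lmul c H)) v = q a b * q a c * lmul b (lmul c (twist a H)) v.
Proof. by rewrite twist_lmul (eq_lmul _ (twist_lmul a c H)) lmulZ mulrA. Qed.

Lemma eq_iter_der r F G : F =1 G -> iter_der r F = iter_der r G.
Proof.
elim: r F G => [|a r IH] F G eqFG /=; first exact: eqFG.
exact/IH/eq_skew_der.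
Qed.

Lemma iter_derZ r c F : iter_der r (fun w => c * F w) = c * iter_der r F.
Proof.
elim: r F => [|a r IH] F //=.
by rewrite -IH; apply: eq_iter_der => w; rewrite skew_derZ.
Qed.

Section QCommutator.
Variables e1 e2 : X.
Hypothesis e1_neq_e2 : e1 != e2.

Definition qcomm F w : algC := lmul e1 (lmul e2 F) w - q e1 e2 * lmul e2 (lmul e1 F) w.

Definition qcomm_pow n := iter n qcomm fone.

Lemma eq_qcomm F G : F =1 G -> qcomm F =1 qcomm G.
Proof. by move=> eqFG w; rewrite /qcomm !(eq_lmul _ (eq_lmul _ eqFG)). Qed.

Lemma qcommZ c F v : qcomm (fun w => c * F w) v = c * qcomm F v.
Proof.
rewrite /qcomm (eq_lmul _ (lmulZ e2 c F)) (eq_lmul _ (lmulZ e1 c F)) !lmulZ.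
by rewrite mulrBr mulrCA.
Qed.

Lemma twist_qcomm a F v :
  q a e1 * q a e2 = 1 -> twist a (qcomm F) v = qcomm (twist a F) v.
Proof.
move=> qa; rewrite {1}/twist /qcomm mulrBr mulrCA.
rewrite -/(twist a (lmul e1 (lmul e2 F)) v) -/(twist a (lmul e2 (lmul e1 F)) v).
by rewrite !twist_lmul2 qa [q a e2 * _]mulrC qa !mul1r.
Qed.

Lemma twist_qcomm_pow a n :
  q a e1 * q a e2 = 1 -> twist a (qcomm_pow n) =1 qcomm_pow n.
Proof.
move=> qa; elim: n => [|n IH] v; first exact: twist_fone.
by rewrite /= twist_qcomm //; apply: eq_qcomm.
Qed.

Lemma skew_der1_qcomm F v : skew_der e1 (qcomm F) v = qcomm (skew_der e1 F) v.
Proof.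
rewrite /qcomm skew_derB skew_derZ skew_der_lmul_eq (skew_der_lmul_neq _ e1_neq_e2).
rewrite twist_lmul (eq_lmul _ (skew_der_lmul_neq _ e1_neq_e2)).
by rewrite (eq_lmul _ (skew_der_lmul_eq _ _)) lmulD; ring.
Qed.

Lemma skew_der2_qcomm F v : skew_der e2 (qcomm F) v =
  (1 - q e1 e2 * q e2 e1) * lmul e1 (twist e2 F) v + qcomm (skew_der e2 F) v.
Proof.
have e2_neq_e1 : e2 != e1 by rewrite eq_sym.
rewrite /qcomm skew_derB skew_derZ (skew_der_lmul_neq _ e2_neq_e1) skew_der_lmul_eq.
rewrite (eq_lmul _ (skew_der_lmul_eq _ _)) lmulD twist_lmul.
by rewrite (eq_lmul _ (skew_der_lmul_neq _ e2_neq_e1)); ring.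
Qed.

Lemma qcomm0 v : qcomm (fun=> 0) v = 0.
Proof. by rewrite /qcomm !(eq_lmul _ (lmul0 _)) !lmul0 mulr0 subr0. Qed.

Lemma skew_der1_qcomm_pow n : skew_der e1 (qcomm_pow n) =1 fun=> 0.
Proof.
elim: n => [|n IH] v; first exact: skew_der_fone.
by rewrite /= skew_der1_qcomm (eq_qcomm IH) qcomm0.
Qed.

Hypothesis q1 : q e1 e1 * q e1 e2 = 1.
Hypothesis q2 : q e2 e1 * q e2 e2 = 1.

Lemma skew_der1_lmul1_qcomm_pow n v :
  skew_der e1 (lmul e1 (qcomm_pow n)) v = qcomm_pow n v.
Proof.
by rewrite skew_der_lmul_eq twist_qcomm_pow // (eq_lmul _ (skew_der1_qcomm_pow n)) lmul0 addr0.
Qed.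

Lemma skew_der2_qcomm_pow n v : skew_der e2 (qcomm_pow n.+1) v =
  (1 - q e1 e2 * q e2 e1) * lmul e1 (qcomm_pow n) v + qcomm (skew_der e2 (qcomm_pow n)) v.
Proof. by rewrite /= skew_der2_qcomm (eq_lmul _ (twist_qcomm_pow _ q2)). Qed.

Lemma skew_der12_qcomm_pow n v : skew_der e1 (skew_der e2 (qcomm_pow n)) v =
  (1 - q e1 e2 * q e2 e1) * n%:R * qcomm_pow n.-1 v.
Proof.
elim: n v => [|n IH] v.
  by rewrite (eq_skew_der _ (skew_der_fone _)) skew_der0 mulr0 mul0r.
rewrite (eq_skew_der _ (skew_der2_qcomm_pow n)) skew_derD skew_derZ.
rewrite skew_der1_lmul1_qcomm_pow skew_der1_qcomm (eq_qcomm IH) qcommZ.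
set c := 1 - _ * _; rewrite -[c * n%:R * _]mulrA.
have -> : n%:R * qcomm (qcomm_pow n.-1) v = n%:R * qcomm_pow n v.
  by case: n {IH} => [|n]; rewrite ?mul0r.
by rewrite -[n.+1.-1]/n -[n.+1]addn1 natrD; ring.
Qed.

Lemma iter_der_qcomm_pow n : iter_der (flatten (nseq n [:: e2; e1])) (qcomm_pow n) =
  (1 - q e1 e2 * q e2 e1) ^+ n * n`!%:R.
Proof.
elim: n => [|n IH] /=; first by rewrite /fone eqxx expr0 mulr1.
rewrite (eq_iter_der _ (skew_der12_qcomm_pow n.+1)) iter_derZ IH factS natrM exprS.
by ring.
Qed.
End QCommutator.

Section LetterPower.
Variable e : X.
Hypothesis qe : q e e = 1.

Definition letter_pow n := iter n (lmul e) fone.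

Lemma twist_letter_pow n : twist e (letter_pow n) =1 letter_pow n.
Proof.
elim: n => [|n IH] v; first exact: twist_fone.
by rewrite /= twist_lmul qe mul1r; apply: eq_lmul.
Qed.

Lemma skew_der_letter_pow n v : skew_der e (letter_pow n) v = n%:R * letter_pow n.-1 v.
Proof.
elim: n v => [|n IH] v; first by rewrite skew_der_fone mul0r.
rewrite /= skew_der_lmul_eq twist_letter_pow (eq_lmul _ IH) lmulZ.
have -> : n%:R * lmul e (letter_pow n.-1) v = n%:R * letter_pow n v.
  by case: n {IH} => [|n]; rewrite ?mul0r.
by rewrite -[n.+1]addn1 natrD mulrDl mul1r addrC.
Qed.

Lemma iter_der_letter_pow n : iter_der (nseq n e) (letter_pow n) = n`!%:R.
Proof.
elim: n => [|n IH] /=; first by rewrite /fone eqxx.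
by rewrite (eq_iter_der _ (skew_der_letter_pow n.+1)) iter_derZ IH factS natrM.
Qed.
End LetterPower.

End SkewDerivations.

Section Symmetrizer.
Variables (X : finType) (cc : X -> X -> X -> X -> algC) (S : pred X) (x0 : X).

Definition qcoef a b : algC := cc b a a b.

Hypothesis braiding_diag : forall a b h t', S a -> S b ->
  cc h t' a b = ((t' == a) && (h == b))%:R * qcoef a b.

Definition op_apply n (A : op X n) (f : n.-tuple X -> algC) (y : n.-tuple X) : algC :=
  \sum_(w : n.-tuple X) A y w * f w.

Definition supported (F : seq X -> algC) := forall w, F w != 0 -> all S w.

Lemma eq_op_apply n (A : op X n) f f' y : f =1 f' -> op_apply A f y = op_apply A f' y.
Proof. by move=> eqf; apply: eq_bigr => w _; rewrite eqf. Qed.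

Lemma op_apply_comp n (A B : op X n) f y :
  op_apply (comp_op X n A B) f y = op_apply A (op_apply B f) y.
Proof.
rewrite /op_apply /comp_op; under eq_bigr do rewrite big_distrl /=.
rewrite exchange_big /=; apply: eq_bigr => v _.
by rewrite big_distrr /=; apply: eq_bigr => w _; rewrite mulrA.
Qed.

Lemma op_apply_id n f y : op_apply (id_op X n) f y = f y.
Proof.
rewrite /op_apply /id_op (bigD1 y) //= eqxx mul1r big1 ?addr0 // => w /negbTE.
by rewrite eq_sym => ->; rewrite mul0r.
Qed.

Definition swap_at (i : nat) (s : seq X) : seq X :=
  mkseq (fun j => nth x0 s (if j == i then i.+1 else if j == i.+1 then i else j)) (size s).

Lemma size_swap_at i s : size (swap_at i s) = size s.
Proof. by rewrite size_mkseq. Qed.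

Lemma nth_swap_at i s j : (j < size s)%N ->
  nth x0 (swap_at i s) j = nth x0 s (if j == i then i.+1 else if j == i.+1 then i else j).
Proof. exact: nth_mkseq. Qed.

Lemma nth_swap_at_i i s : (i.+1 < size s)%N -> nth x0 (swap_at i s) i = nth x0 s i.+1.
Proof. by move=> lt_i; rewrite nth_swap_at ?eqxx // ltnW. Qed.

Lemma nth_swap_at_iS i s : (i.+1 < size s)%N -> nth x0 (swap_at i s) i.+1 = nth x0 s i.
Proof. by move=> lt_i; rewrite nth_swap_at // (gtn_eqF (ltnSn i)) eqxx. Qed.

Lemma nth_swap_at_other i s j : j != i -> j != i.+1 ->
  nth x0 (swap_at i s) j = nth x0 s j.
Proof.
move=> /negbTE ji /negbTE jiS; case: (ltnP j (size s)) => [j_lt|j_ge].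
  by rewrite nth_swap_at // ji jiS.
by rewrite !nth_default ?size_swap_at.
Qed.

Lemma all_swap_at i s : (i.+1 < size s)%N -> all S (swap_at i s) -> all S s.
Proof.
move=> lt_i /(all_nthP x0); rewrite size_swap_at => Sswap.
apply/(all_nthP x0) => j j_lt.
case: (eqVneq j i) => [->|ji]; first by rewrite -nth_swap_at_iS // Sswap.
case: (eqVneq j i.+1) => [->|jiS]; first by rewrite -nth_swap_at_i // Sswap // ltnW.
by rewrite -(nth_swap_at_other s ji jiS) Sswap.
Qed.

Lemma cop_diag n i (lt_i : (i.+1 < n)%N) (y w : n.-tuple X) : all S w ->
  cop X cc n i y w = (swap_at i y == w)%:R * qcoef (nth x0 w i) (nth x0 w i.+1).
Proof.
move=> /(all_nthP x0); rewrite size_tuple => Sw.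
have lt_i' : (i < n)%N by apply: ltnW.
rewrite /cop (insubT (fun j => j < n)%N lt_i') (insubT (fun j => j < n)%N lt_i) /=.
rewrite braiding_diag !(tnth_nth x0) ?Sw //= mulrA -natrM mulnb.
congr ((nat_of_bool _)%:R * _).
have y_i : (i.+1 < size y)%N by rewrite size_tuple.
apply/idP/idP => [/andP[/forallP y_w /andP[/eqP w_i /eqP w_iS]]|/eqP w_eq].
  apply/eqP/(@eq_from_nth _ x0) => [|j]; first by rewrite size_swap_at !size_tuple.
  rewrite size_swap_at size_tuple => j_lt.
  case: (eqVneq j i) => [->|ji]; first by rewrite nth_swap_at_i.
  case: (eqVneq j i.+1) => [->|jiS]; first by rewrite nth_swap_at_iS.
  have /implyP := y_w (Ordinal j_lt); rewrite -!val_eqE /= ji jiS !(tnth_nth x0) /=.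
  by move=> /(_ isT) /eqP <-; rewrite nth_swap_at_other.
rewrite -w_eq nth_swap_at_i // nth_swap_at_iS // !eqxx !andbT.
apply/forallP => j; apply/implyP; rewrite -!val_eqE /= => /andP[ji jiS].
by rewrite !(tnth_nth x0) -w_eq nth_swap_at_other.
Qed.

Lemma op_apply_cop n i F (y : n.-tuple X) : (i.+1 < n)%N -> supported F ->
  op_apply (cop X cc n i) (fun w => F w) y =
  qcoef (nth x0 y i.+1) (nth x0 y i) * F (swap_at i y).
Proof.
move=> lt_i Fs; have y_i : (i.+1 < size y)%N by rewrite size_tuple.
have size_swap : size (swap_at i y) == n by rewrite size_swap_at size_tuple.
rewrite /op_apply (bigD1 (Tuple size_swap)) //= big1 ?addr0 => [|w w_neq]; last first.
  case: (eqVneq (F w) 0) => [->|/Fs Sw]; first by rewrite mulr0.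
  rewrite cop_diag // -[swap_at i y]/(val (Tuple size_swap)) val_eqE.
  by rewrite eq_sym (negbTE w_neq) !mul0r.
case: (eqVneq (F (swap_at i y)) 0) => [->|/Fs Sw]; first by rewrite !mulr0.
by rewrite cop_diag //= eqxx mul1r nth_swap_at_i // nth_swap_at_iS.
Qed.

Lemma op_apply_prodc_rcons n s i f y :
  op_apply (prodc X cc n (rcons s i)) f y =
  op_apply (prodc X cc n s) (op_apply (cop X cc n i) f) y.
Proof.
elim: s y => [|j s IH] y.
  by rewrite op_apply_comp op_apply_id; apply: eq_op_apply => w; rewrite op_apply_id.
by rewrite !op_apply_comp; apply: eq_op_apply.
Qed.

Lemma swap_at_cat i l b c r : size l = i ->
  swap_at i (l ++ b :: c :: r) = l ++ c :: b :: r.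
Proof.
move=> size_l; apply: (@eq_from_nth _ x0); first by rewrite size_swap_at !size_cat.
move=> j; rewrite size_swap_at => j_lt; rewrite nth_swap_at // !nth_cat size_l.
case: (ltngtP j i) => [ji|ij|->].
- by rewrite (ltn_eqF (ltnW ji : (j < i.+1)%N)) ji.
- case: (eqVneq j i.+1) => [->|jiS]; first by rewrite ltnn subnn subSnn.
  rewrite ltnNge (ltnW ij) /=.
  have [d ->] : exists d, (j - i = d.+2)%N by exists (j - i - 2)%N; lia.
  by [].
- by rewrite ltnNge leqnSn /= subSnn subnn.
Qed.

Definition braid_at i (F : seq X -> algC) (w : seq X) : algC :=
  if (i.+1 < size w)%N then qcoef (nth x0 w i.+1) (nth x0 w i) * F (swap_at i w) else 0.

Lemma supported_braid_at i F : supported F -> supported (braid_at i F).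
Proof.
move=> Fs w; rewrite /braid_at; case: ifP => [lt_i|_]; last by rewrite eqxx.
case: (eqVneq (F (swap_at i w)) 0) => [->|/Fs Sw]; first by rewrite mulr0 eqxx.
by move=> _; apply: (all_swap_at lt_i).
Qed.

Lemma braid_at_cat i F l b a r : size l = i ->
  braid_at i F (l ++ b :: a :: r) = qcoef a b * F (l ++ a :: b :: r).
Proof.
move=> size_l; rewrite /braid_at size_cat /= swap_at_cat // !nth_cat size_l ltnn.
have -> : (i.+1 < i)%N = false by lia.
by rewrite subnn subSnn ifT //; lia.
Qed.

Lemma op_apply_prodc_insert m j F v0 a (y : m.+1.-tuple X) :
  supported F -> (j <= m)%N -> size v0 = m -> val y = rcons v0 a ->
  op_apply (prodc X cc m.+1 [seq (m.-1 - l)%N | l <- iota 0 j]) (fun w => F w) y =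
  qprod qcoef a (drop (m - j) v0) * F (take (m - j) v0 ++ a :: drop (m - j) v0).
Proof.
move=> + + size_v0 y_eq; elim: j F => [|j IH] F Fs j_le.
  rewrite /= op_apply_id subn0 drop_oversize ?size_v0 // take_oversize ?size_v0 //.
  by rewrite y_eq cats1 /qprod big_nil mul1r.
set i := (m.-1 - j)%N; have lt_i : (i.+1 < m.+1)%N by rewrite /i; lia.
rewrite -[j.+1]addn1 iotaD map_cat cats1 op_apply_prodc_rcons.
rewrite (@eq_op_apply _ _ _ (fun w => braid_at i F w)); last first.
  by move=> w; rewrite op_apply_cop // /braid_at size_tuple lt_i.
rewrite IH //; [|exact: supported_braid_at|lia].
have -> : (m - j = i.+1)%N by rewrite /i; lia.
have -> : (m - (j + 1) = i)%N by rewrite /i; lia.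
have lt_i_v0 : (i < size v0)%N by rewrite size_v0 /i; lia.
rewrite (take_nth x0 lt_i_v0) cat_rcons braid_at_cat ?size_take ?lt_i_v0 //.
by rewrite (drop_nth x0 lt_i_v0) /qprod big_cons; ring.
Qed.

Lemma supported_skew_der a F : supported F -> supported (skew_der qcoef a F).
Proof.
move=> Fs v; apply: contraR => notSv; rewrite /skew_der big1 // => p _.
case: (eqVneq (F (take p v ++ a :: drop p v)) 0) => [->|/Fs]; first by rewrite mulr0.
rewrite all_cat /= => /and3P[S_take _ S_drop].
by move: notSv; rewrite -[v in all S v](cat_take_drop p v) all_cat S_take S_drop.
Qed.

Definition shuffle_op m : op X m.+1 := fun w' w =>
  \sum_(j < m.+1) prodc X cc m.+1 [seq (m.-1 - l)%N | l <- iota 0 j] w' w.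
Arguments shuffle_op : clear implicits.

Lemma Omega_rec m :
  Omega X cc m.+1 = comp_op X m.+1 (ext_op X m (Omega X cc m)) (shuffle_op m).
Proof. by []. Qed.

Lemma op_apply_shuffle m F v0 a (y : m.+1.-tuple X) :
  supported F -> size v0 = m -> val y = rcons v0 a ->
  op_apply (shuffle_op m) (fun w => F w) y = skew_der qcoef a F v0.
Proof.
move=> Fs size_v0 y_eq; rewrite /op_apply /shuffle_op.
under eq_bigr do rewrite big_distrl /=.
rewrite exchange_big /= /skew_der size_v0 (reindex_inj rev_ord_inj) /=.
apply: eq_bigr => j _; rewrite subSS.
rewrite [LHS](op_apply_prodc_insert Fs (leq_subr _ _) size_v0 y_eq).
by have -> : (m - (m - j) = j)%N by have := ltn_ord j; lia.
Qed.

Lemma init_rcons_tuple m (v0 : m.-tuple X) x : init_tuple X m (rcons_tuple v0 x) = v0.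
Proof.
apply: eq_from_tnth => j; rewrite tnth_mktuple !(tnth_nth x0) /=.
by rewrite nth_rcons size_tuple ltn_ord.
Qed.

Lemma last_rcons_tuple m (v0 : m.-tuple X) x : tnth (rcons_tuple v0 x) ord_max = x.
Proof. by rewrite (tnth_nth x0) /= nth_rcons size_tuple ltnn eqxx. Qed.

Lemma rcons_tuple_init m (v : m.+1.-tuple X) :
  rcons_tuple (init_tuple X m v) (tnth v ord_max) = v.
Proof.
apply: eq_from_tnth => j; rewrite (tnth_nth x0) /= nth_rcons size_tuple.
rewrite card_ord; case: ltngtP => [j_lt|j_gt|j_eq].
- rewrite (nth_map (Ordinal j_lt)) ?size_enum_ord //.
  by congr tnth; apply: val_inj; rewrite /= nth_enum_ord.
- by have := ltn_ord j; rewrite ltnS leqNgt j_gt.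
- by congr tnth; apply: val_inj; rewrite /= j_eq.
Qed.

Lemma sum_rcons_tuple m (G : m.+1.-tuple X -> algC) :
  \sum_(v : m.+1.-tuple X) G v = \sum_(v0 : m.-tuple X) \sum_(x : X) G (rcons_tuple v0 x).
Proof.
rewrite pair_big /= (reindex (fun p : m.-tuple X * X => rcons_tuple p.1 p.2)) //=.
exists (fun v => (init_tuple X m v, tnth v ord_max)) => [[v0 x] _|v _] /=.
  by rewrite init_rcons_tuple last_rcons_tuple.
exact: rcons_tuple_init.
Qed.

Lemma op_apply_Omega n F (y : n.-tuple X) : supported F ->
  op_apply (Omega X cc n) (fun w => F w) y = iter_der qcoef (rev y) F.
Proof.
elim: n F y => [|m IH] F y Fs; first by rewrite /= op_apply_id (tuple0 y).
rewrite Omega_rec op_apply_comp {1}/op_apply sum_rcons_tuple.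
set a := tnth y ord_max.
rewrite (eq_bigr (fun v0 => Omega X cc m (init_tuple X m y) v0 * skew_der qcoef a F v0)).
  have := IH (skew_der qcoef a F) (init_tuple X m y) (supported_skew_der (a := a) Fs).
  by rewrite /op_apply => ->; rewrite -{2}(rcons_tuple_init y) /= rev_rcons.
move=> v0 _; rewrite (bigD1 a) //= big1 ?addr0 => [|x x_neq]; last first.
  by rewrite /ext_op init_rcons_tuple last_rcons_tuple eq_sym (negbTE x_neq) !mulr0 mul0r.
rewrite /ext_op init_rcons_tuple last_rcons_tuple eqxx mulr1.
by rewrite (op_apply_shuffle Fs (size_tuple v0) (erefl (rcons v0 a))).
Qed.

End Symmetrizer.

Section InfiniteNichols.
Variables (X : finType) (cc : X -> X -> X -> X -> algC) (S : pred X) (x0 : X).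
Hypothesis braiding_diag : forall a b h t', S a -> S b ->
  cc h t' a b = ((t' == a) && (h == b))%:R * qcoef cc a b.

Local Notation supported := (supported S).

Lemma supported_fone : supported (@fone X).
Proof. by case=> [|x w] //; rewrite /fone eqxx. Qed.

Lemma supported_lmul b F : S b -> supported F -> supported (lmul b F).
Proof.
move=> Sb Fs [|x w] /=; first by rewrite eqxx.
rewrite mulf_eq0 negb_or pnatr_eq0 eqb0 negbK => /andP[/eqP -> /Fs].
by rewrite /= Sb.
Qed.

Lemma supported_qcomm q e1 e2 F : S e1 -> S e2 -> supported F ->
  supported (qcomm q e1 e2 F).
Proof.
move=> S1 S2 Fs w; apply: contraR => notSw; rewrite /qcomm.
have lmul2_0 b c : S b -> S c -> lmul b (lmul c F) w = 0.
  move=> Sb Sc; apply/eqP; apply: contraR notSw.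
  exact: (supported_lmul Sb (supported_lmul Sc Fs)).
by rewrite !lmul2_0 // mulr0 subr0.
Qed.

Lemma supported_qcomm_pow q e1 e2 n : S e1 -> S e2 -> supported (qcomm_pow q e1 e2 n).
Proof.
move=> S1 S2; elim: n => [|n IH] /=; first exact: supported_fone.
exact: supported_qcomm.
Qed.

Lemma supported_letter_pow e n : S e -> supported (letter_pow e n).
Proof.
move=> Se; elim: n => [|n IH] /=; first exact: supported_fone.
exact: supported_lmul.
Qed.

Lemma Omega_rank_gt0 (y : seq X) F : supported F ->
  iter_der (qcoef cc) (rev y) F != 0 -> (0 < \rank (Omega_mx X cc (size y)))%N.
Proof.
move=> Fs; rewrite -[y]/(val (in_tuple y)) -(op_apply_Omega x0 braiding_diag _ Fs).
rewrite lt0n mxrank_eq0; apply: contraNN => /eqP Omega0.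
rewrite /op_apply big1 // => w _.
have : Omega_mx X cc (size y) (enum_rank (in_tuple y)) (enum_rank w) = 0.
  by rewrite Omega0 mxE.
by rewrite /Omega_mx mxE !enum_rankK => ->; rewrite mul0r.
Qed.

Lemma nichols_dim_infinite_of_even_rank :
  (forall n, 0 < \rank (Omega_mx X cc n.*2))%N -> nichols_dim_infinite X cc.
Proof.
pose r n := \rank (Omega_mx X cc n); move=> rank_gt0 N; exists N.*2.
rewrite -/(\sum_(n < N.*2) r n); elim: N => [|N IH] //.
rewrite doubleS !big_ord_recr /=; have := rank_gt0 N; rewrite -/(r _).
by move: (\sum_(i < _) r i) IH (r N.*2) (r N.*2.+1) => s IH a b; lia.
Qed.

Lemma rev_flatten_nseq (T : Type) (s : seq T) n :
  rev (flatten (nseq n s)) = flatten (nseq n (rev s)).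
Proof.
elim: n => [|n IH] //=; rewrite rev_cat IH.
elim: n {IH} => [|n IH] /=; first by rewrite cats0.
by rewrite -catA IH.
Qed.

Lemma size_flatten_nseq (T : Type) (s : seq T) n : size (flatten (nseq n s)) = (n * size s)%N.
Proof. by elim: n => [|n IH] //=; rewrite size_cat IH. Qed.

Theorem nichols_dim_infinite_qcomm e1 e2 : S e1 -> S e2 -> e1 != e2 ->
  qcoef cc e1 e1 * qcoef cc e1 e2 = 1 -> qcoef cc e2 e1 * qcoef cc e2 e2 = 1 ->
  1 - qcoef cc e1 e2 * qcoef cc e2 e1 != 0 -> nichols_dim_infinite X cc.
Proof.
move=> S1 S2 e1_neq_e2 q1 q2 q12; apply: nichols_dim_infinite_of_even_rank => n.
have F_supp := supported_qcomm_pow (q := qcoef cc) (n := n) S1 S2.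
have := Omega_rank_gt0 (y := flatten (nseq n [:: e1; e2])) F_supp.
rewrite size_flatten_nseq /= muln2 rev_flatten_nseq iter_der_qcomm_pow //; apply.
by rewrite mulf_neq0 ?expf_neq0 // pnatr_eq0 -lt0n fact_gt0.
Qed.

Theorem nichols_dim_infinite_qid e : S e -> qcoef cc e e = 1 -> nichols_dim_infinite X cc.
Proof.
move=> Se qe; apply: nichols_dim_infinite_of_even_rank => n.
have := Omega_rank_gt0 (y := nseq n.*2 e) (supported_letter_pow (n := n.*2) Se).
by rewrite size_nseq rev_nseq iter_der_letter_pow // pnatr_eq0 -lt0n fact_gt0; apply.
Qed.

End InfiniteNichols.

Lemma sqr_root_of_unity_neq1 (R : idomainType) (w : R) n : (0 < n)%N ->
  w ^+ n = 1 -> w != 1 -> w != -1 -> 1 - w ^+ n.-1 * w ^+ n.-1 != 0.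
Proof.
move=> n_gt0 wn w_neq1 w_neqN1; have w_inv : w * w ^+ n.-1 = 1 by rewrite -exprS prednK.
rewrite subr_eq0 eq_sym; apply: contraTneq isT => wV2.
have w2 : w * w = 1 by rewrite -[w * w]mulr1 -wV2 mulrACA w_inv mulr1.
have : (w - 1) * (w + 1) = 0 by rewrite -subr_sqr expr1n expr2 w2 subrr.
by move/eqP; rewrite mulf_eq0 subr_eq0 addr_eq0 (negbTE w_neq1) (negbTE w_neqN1).
Qed.

Lemma commuteJ (gT : finGroupType) (x y z : gT) :
  commute x y -> commute (x ^ z)%g (y ^ z)%g.
Proof. by move=> cxy; rewrite /commute -!conjMg cxy. Qed.

Section CyclePermutation.
Variable k : nat.
Hypothesis k_gt2 : (2 < k)%N.

Let k_gt0 : (0 < k)%N. Proof. exact: leq_trans k_gt2. Qed.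
Let i0 : 'I_k := Ordinal k_gt0.

Local Notation pi := (pik k).

Lemma rcomp_conj (x y : {perm 'I_k}) : rcomp k (rcomp k x y) x^-1 = (y ^ x)%g.
Proof. by rewrite /rcomp conjgE. Qed.

Lemma rcompV_conj (x y : {perm 'I_k}) : rcomp k (rcomp k x^-1 y) x = (y ^ x^-1)%g.
Proof. by rewrite /rcomp conjgE invgK. Qed.

Lemma pikX_val m (x : 'I_k) : val ((pi ^+ m)%g x) = ((x + m) %% k)%N.
Proof.
elim: m => [|m IH]; first by rewrite expg0 perm1 addn0 modn_small.
by rewrite expgSr permM permE /= IH addnS -[in LHS]addn1 modnDml addn1.
Qed.

Lemma eq_pikX a b : ((pi ^+ a)%g == (pi ^+ b)%g) = (a == b %[mod k]).
Proof.
apply/eqP/eqP => [piX_eq|ab_eq].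
  by have := congr1 (fun s : {perm 'I_k} => val (s i0)) piX_eq; rewrite /= !pikX_val.
by apply/permP => x; apply: val_inj; rewrite !pikX_val -modnDmr ab_eq modnDmr.
Qed.

Lemma pikXk : (pi ^+ k)%g = 1%g.
Proof. by apply/permP => x; apply: val_inj; rewrite pikX_val perm1 modnDr modn_small. Qed.

Lemma pikV : (pi^-1)%g = (pi ^+ k.-1)%g.
Proof. by apply/eqP; rewrite eq_invg_mul -expgS prednK // pikXk. Qed.

Lemma pikX_neq1 m : (0 < m < k)%N -> (pi ^+ m)%g != 1%g.
Proof.
move=> /andP[m_gt0 m_lt]; apply/eqP => piX1.
have := congr1 (fun s : {perm 'I_k} => val (s i0)) piX1.
by rewrite /= pikX_val perm1 /= add0n modn_small // => m0; rewrite m0 in m_gt0.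
Qed.

Lemma commute_pik (s : {perm 'I_k}) : commute s pi -> s \in <[pi]>%g.
Proof.
move=> c_s_pi; apply/cycleP; exists (s i0); apply/permP => x.
have x_eq : x = (pi ^+ x)%g i0 by apply: val_inj; rewrite pikX_val /= add0n modn_small.
rewrite {1}x_eq -permM -(commuteX x c_s_pi) permM; apply: val_inj.
by rewrite !pikX_val addnC.
Qed.

Lemma pikX_conj_odd m (x : {perm 'I_k}) :
  ~~ odd k -> (pi ^+ m)%g = (pi ^ x)%g -> odd m.
Proof.
move=> k_even piX_eq; apply: contraT => m_even.
have : ((pi ^ x) ^+ k./2)%g != 1%g by rewrite -conjXg conjg_eq1 pikX_neq1 //; lia.
rewrite -piX_eq -expgM.
have -> : (m * k./2 = m./2 * k)%N.
  rewrite -{1}(odd_double_half m) -{2}(odd_double_half k).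
  by rewrite (negbTE m_even) (negbTE k_even) -!muln2; lia.
by rewrite mulnC expgM pikXk expg1n eqxx.
Qed.

Definition ord_opp (x : 'I_k) : 'I_k := Ordinal (ltn_pmod (k - x) k_gt0).

Lemma ord_oppK : involutive ord_opp.
Proof.
move=> x; apply: val_inj => /=; have := ltn_ord x.
case: (val x) => [|n] n_lt; first by rewrite subn0 modnn subn0 modnn.
rewrite (@modn_small (k - n.+1)); last by lia.
by rewrite modn_small; lia.
Qed.

Definition opp_perm : {perm 'I_k} := perm (can_inj ord_oppK).

Lemma opp_permV : (opp_perm^-1)%g = opp_perm.
Proof.
apply/eqP; rewrite eq_invg_mul; apply/eqP/permP => x.
by rewrite permM perm1 !permE ord_oppK.
Qed.

Lemma pik_opp_perm : (pi ^ opp_perm)%g = (pi^-1)%g.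
Proof.
rewrite pikV conjgE opp_permV; apply/permP => x; apply: val_inj.
rewrite !permM pikX_val !permE /=; have := ltn_ord x.
case: (val x) => [|n] n_lt.
  by rewrite subn0 modnn (@modn_small 1) ?add0n ?subn1 //; lia.
rewrite (@modn_small (k - n.+1)); last by lia.
have -> : (n.+1 + k.-1 = n + k)%N by lia.
rewrite modnDr; case: n n_lt => [|n] n_lt.
  by rewrite subn1 prednK // modnn subn0 modnn mod0n.
rewrite (@modn_small (k - n.+2).+1); last by lia.
by have -> : (k - (k - n.+2).+1 = n.+1)%N by lia.
Qed.

Lemma pik_in_Opi : pi \in Opi k.
Proof. by apply/imsetP; exists 1%g; rewrite // rcomp_conj conjg1. Qed.

Lemma pikV_in_Opi : (pi^-1)%g \in Opi k.
Proof. by apply/imsetP; exists opp_perm; rewrite // rcomp_conj pik_opp_perm. Qed.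

End CyclePermutation.

Section CycleBraiding.
Variables (k : nat) (g : Xk k -> {perm 'I_k}).
Hypothesis k_gt2 : (2 < k)%N.
Hypothesis g_conj : forall t : Xk k, rcomp k (rcomp k (g t) (pik k)) (g t)^-1 = val t.

Let k_gt0 : (0 < k)%N. Proof. exact: leq_trans k_gt2. Qed.

Local Notation pi := (pik k).

Lemma chi_pikX omega m : chi k omega (pi ^+ m)%g = omega ^+ (m %% k).
Proof.
rewrite /chi; case: pickP => [m'|no_m].
  by rewrite eq_pikX // => /eqP; rewrite (modn_small (ltn_ord m')) => ->.
by have := no_m (Ordinal (ltn_pmod m k_gt0)); rewrite eq_pikX //= modn_mod eqxx.
Qed.

Lemma pik_conj_g t : (pi ^ g t)%g = val t.
Proof. by rewrite -g_conj rcomp_conj. Qed.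

Lemma val_conj_gV t : (val t ^ (g t)^-1)%g = pi.
Proof. by rewrite -pik_conj_g conjgK. Qed.

Lemma braiding_factor_cent (a b h : Xk k) : commute (val a) (val b) ->
  (rcomp k (rcomp k (g h)^-1 (val a)) (g b) \in 'C[pi]%g) = (h == b).
Proof.
move=> c_ab; rewrite /rcomp; apply/cent1P/eqP => [c_pi|->]; last first.
  have -> : (g b * (val a * (g b)^-1))%g = (val a ^ (g b)^-1)%g by rewrite conjgE invgK.
  by rewrite -(val_conj_gV b); apply: commuteJ.
apply: val_inj; rewrite -[val h]pik_conj_g -[val b]pik_conj_g.
have pi_fix : (pi ^ (g b * (val a * (g h)^-1)))%g = pi by rewrite conjgE -c_pi mulKg.
by rewrite -{1}pi_fix -conjgM -!mulgA mulVg mulg1 conjgM pik_conj_g conjgE -c_ab mulKg.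
Qed.

Lemma chi_pik omega : chi k omega pi = omega.
Proof. by rewrite -[pi]expg1 chi_pikX modn_small ?expr1 // ltnW. Qed.

Lemma chi_pikV omega : chi k omega (pi^-1)%g = omega ^+ k.-1.
Proof. by rewrite pikV // chi_pikX modn_small // ltn_predL. Qed.

Lemma qcoef_yd_coef rho (a b : Xk k) : commute (val a) (val b) ->
  qcoef (yd_coef k rho g) a b = rho (val a ^ (g b)^-1)%g.
Proof.
by move=> c_ab; rewrite /qcoef /yd_coef braiding_factor_cent // !eqxx mul1r rcompV_conj.
Qed.

Lemma yd_coef_diag rho (a b h t' : Xk k) : commute (val a) (val b) ->
  yd_coef k rho g h t' a b = ((t' == a) && (h == b))%:R * qcoef (yd_coef k rho g) a b.
Proof.
move=> c_ab; rewrite /qcoef /yd_coef !braiding_factor_cent // !eqxx /= mul1r.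
by case: (eqVneq h b) => [->|_]; rewrite ?andbF ?mul0r.
Qed.

Lemma yd_coef_diag_cycle rho (a b h t' : Xk k) :
  val a \in <[pi]>%g -> val b \in <[pi]>%g ->
  yd_coef k rho g h t' a b = ((t' == a) && (h == b))%:R * qcoef (yd_coef k rho g) a b.
Proof.
move=> /cycleP[i a_eq] /cycleP[j b_eq]; apply: yd_coef_diag.
by rewrite a_eq b_eq; apply: commuteX2.
Qed.

Lemma qcoef_yd_coef_self rho (a : Xk k) : qcoef (yd_coef k rho g) a a = rho pi.
Proof. by rewrite qcoef_yd_coef ?val_conj_gV. Qed.

Lemma qcoef_yd_coef_inv rho (a b : Xk k) : val a = (val b)^-1%g ->
  qcoef (yd_coef k rho g) a b = rho (pi^-1)%g.
Proof.
move=> a_eq; rewrite qcoef_yd_coef a_eq ?conjVg ?val_conj_gV //.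
exact/commute_sym/commuteV/commute_refl.
Qed.

Lemma nichols_dim_infinite_cycle omega : omega ^+ k = 1 -> omega != -1 ->
  nichols_dim_infinite (Xk k) (yd_coef k (chi k omega) g).
Proof.
move=> omega_k omega_neqN1.
pose t : Xk k := exist _ pi (pik_in_Opi k).
pose u : Xk k := exist _ (pi^-1)%g (pikV_in_Opi k_gt2).
have t_cyc : val t \in <[pi]>%g := cycle_id pi.
have u_cyc : val u \in <[pi]>%g by rewrite groupV cycle_id.
have tu : val t = (val u)^-1%g by rewrite /= invgK.
have ut : val u = (val t)^-1%g by [].
have diag := yd_coef_diag_cycle (chi k omega).
have omega_inv : omega * omega ^+ k.-1 = 1 by rewrite -exprS prednK.
case: (eqVneq omega 1) => [omega1|omega_neq1].
  by apply: (nichols_dim_infinite_qid t diag t_cyc); rewrite qcoef_yd_coef_self chi_pik.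
apply: (nichols_dim_infinite_qcomm t diag t_cyc u_cyc).
- apply/eqP => /(congr1 val) /= pi_eq; have := pikX_neq1 k_gt2 (m := 2).
  by rewrite k_gt2 expgS expg1 {2}pi_eq mulgV eqxx; move/(_ isT).
- by rewrite qcoef_yd_coef_self (qcoef_yd_coef_inv _ tu) chi_pik chi_pikV.
- by rewrite qcoef_yd_coef_self (qcoef_yd_coef_inv _ ut) chi_pik chi_pikV mulrC.
- rewrite (qcoef_yd_coef_inv _ ut) (qcoef_yd_coef_inv _ tu) chi_pikV.
  exact: sqr_root_of_unity_neq1 k_gt0 omega_k omega_neq1 omega_neqN1.
Qed.

Lemma chi_conj_commute (a b : Xk k) : ~~ odd k -> commute (val a) (val b) ->
  chi k (-1) (val a ^ (g b)^-1)%g = -1.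
Proof.
move=> k_even c_ab.
have /(commute_pik k_gt2)/cycleP[m s_eq] : commute (val a ^ (g b)^-1)%g pi.
  by rewrite -(val_conj_gV b); apply: commuteJ.
have m_odd : odd m.
  apply: (pikX_conj_odd k_gt2 (x := (g a * (g b)^-1)%g)) => //.
  by rewrite -s_eq conjgM pik_conj_g.
by rewrite s_eq chi_pikX -signr_odd odd_mod ?m_odd ?expr1 //; apply/negbTE.
Qed.

Lemma negative_braiding_cycle : ~~ odd k -> negative_braiding k (chi k (-1)) g.
Proof.
move=> k_even t u c_ut /=.
have q_neg (a b : Xk k) : commute (val a) (val b) ->
    chi k (-1) (rcomp k (rcomp k (g b)^-1 (val a)) (g b)) = -1.
  by move=> c_ab; rewrite rcompV_conj chi_conj_commute.
by rewrite !q_neg ?mulrNN ?mulr1.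
Qed.

End CycleBraiding.

Theorem proposition2p2 (k : nat) (hk : (2 < k)%N) (hev : ~~ odd k)
  (omega : algC) (homega : omega ^+ k = 1)
  (g : Xk k -> {perm 'I_k})
  (hg : forall t : Xk k, rcomp k (rcomp k (g t) (pik k)) (g t)^-1 = val t) :
  (omega != -1 -> nichols_dim_infinite (Xk k) (yd_coef k (chi k omega) g)) /\
  (omega = -1 -> negative_braiding k (chi k omega) g).
Proof.
split; first exact: nichols_dim_infinite_cycle.
by move=> ->; apply: negative_braiding_cycle.
Qed.
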